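(* Let $(R_n)_{n\in\mathbb Z}$ satisfy the $(1,4)$-system $$R_{2n}CR_{2n-2}=1+R_{2n-1},\qquad R_{2n+1}CR_{2n-1}=1+R_{2n}^4\qquad(n\in\mathbb Z),$$ and set $u_n=R_{2n}$. Then there is an element $K$ such that for all $n\in\mathbb Z$ $$u_{n+2}C-u_{n+1}K+u_n=0\qquad\text{and}\qquad u_{n+2}-Ku_{n+1}+Cu_n=0.$$ The values of $C$ and $K$ in the two cases of initial data are as follows. (a) For the initial data $R_0=yxy^{-1}$, $R_1=y$ (so that $u_0=yxy^{-1}$ and $u_1=(1+y)x^{-1}$), with $x,y$ non-commuting indeterminates and $C=xyx^{-1}y^{-1}$, one has $$K=\big(x^2+((1+y)x^{-1})^2\big)y^{-1}.$$ (b) For the initial data $R_1=YXY^{-1}$, $R_2=Y$, with $X,Y$ non-commuting indeterminates and $C=XYX^{-1}Y^{-1}$, one has $$K=\big(Y^2+((1+X)Y^{-1})^2\big)YX^{-1}Y^{-1}.$$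
   Context: Work in the free skew field (non-commutative rational functions) over $\mathbb C$ generated by the relevant pair of indeterminates. The recursion determines $R_n$ for all $n\in\mathbb Z$ from two consecutive values. *)

From HB Require Import structures.
From mathcomp Require Import all_boot all_order all_algebra.
Set Implicit Arguments. Unset Strict Implicit. Unset Printing Implicit Defensive.
Import Order.TTheory GRing.Theory Num.Theory.
Local Open Scope ring_scope.

Definition skew_field_char0 (D : unitRingType) : Prop :=
  (forall a : D, a != 0 -> a \is a GRing.unit) /\ [pchar D] =i pred0.

Definition sys14 (D : unitRingType) (C : D) (R : int -> D) : Prop :=
  forall n : int,
    R (2 * n) * C * R (2 * n - 2) = 1 + R (2 * n - 1) /\
    R (2 * n + 1) * C * R (2 * n - 1) = 1 + R (2 * n) ^+ 4.

Definition commC (D : unitRingType) (x y : D) : D := x * y * x^-1 * y^-1.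

Definition lin_rels (D : unitRingType) (C K : D) (R : int -> D) : Prop :=
  forall n : int,
    R (2 * (n + 2)) * C - R (2 * (n + 1)) * K + R (2 * n) = 0 /\
    R (2 * (n + 2)) - K * R (2 * (n + 1)) + C * R (2 * n) = 0.

(* The quasi-commutation relations R_(j+1) C R_j = R_j R_(j+1) propagate along
   the (1,4)-system in both directions, so they hold for every j as soon as they
   hold for one j, which is the case for both initial data.  They give
   u_m u_(m+1) = C^-1 + R_(2m+1), and, with the quartic relation, show that
   K_m = u_m^-1 (1 + C^-1 + R_(2m-1) + R_(2m+1)) u_m^-1 equals one and the same
   expression in u_m, R_(2m+1), u_(m+1) for both K_m and K_(m+1); hence K_m is
   independent of m.  Multiplying K = K_(n+1) by u_(n+1) on the right, resp. on
   the left, yields the two linear relations, and K is read off from the initial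
   data. *)

From HB Require Import structures.
From mathcomp Require Import all_boot all_order all_algebra.
From mathcomp Require Import zify.
Import GRing.Theory.
Set Implicit Arguments. Unset Strict Implicit. Unset Printing Implicit Defensive.
Local Open Scope ring_scope.

Lemma expr4 (D : unitRingType) (x : D) : x ^+ 4 = x * x * x * x.
Proof. by rewrite !exprS expr0 mulr1 !mulrA. Qed.

Section RingIdentities.

Variables (D : unitRingType) (C : D).
Hypothesis unitC : C \is a GRing.unit.

Lemma qcomm_transfer (a b c f : D) :
  a \is a GRing.unit -> c \is a GRing.unit ->
  c * C * a = 1 + f -> f * b = b * f ->
  b * C * a = a * b <-> c * C * b = b * c.
Proof.
move=> ua uc Ec fb.
have uCa : C * a \is a GRing.unit by rewrite unitrMl.
have ucC : c * C \is a GRing.unit by rewrite unitrMl.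
have bcCa : b * c * (C * a) = (1 + f) * b.
  by rewrite -mulrA (mulrA c) Ec mulrDr mulrDl mulr1 mul1r fb.
split=> [Qb | Qc].
  apply: (mulIr uCa); rewrite bcCa -Ec.
  have -> : c * C * b * (C * a) = c * C * (b * C * a) by rewrite !mulrA.
  by rewrite Qb !mulrA.
apply: (mulrI ucC); rewrite !mulrA.
have -> : c * C * b * C * a = b * c * (C * a) by rewrite Qc !mulrA.
by rewrite bcCa -Ec.
Qed.

Lemma qcomm_mul (b q c : D) :
  b \is a GRing.unit ->
  c * C * b = 1 + q -> q * C * b = b * q -> b * c = C^-1 + q.
Proof.
move=> ub Ec Qq.
have -> : c = (1 + q) / b / C by rewrite -Ec !mulrK.
rewrite !mulrA mulrDr mulr1 -Qq mulrDl mulrK // mulrDl mulrK // divrr //.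
by rewrite mul1r.
Qed.

Lemma qcomm_mul_inv (b q c : D) :
  q \is a GRing.unit ->
  c * C * b = 1 + q -> q * C * b = b * q -> c * q^-1 * b = 1 + q^-1.
Proof.
move=> uq Ec Qq.
have Cb : C * b = q^-1 * (b * q) by rewrite -Qq -!mulrA mulKr.
apply: (mulIr uq); rewrite mulrDl mul1r mulVr // addrC -Ec.
by rewrite -!mulrA Cb.
Qed.

Lemma quartic_conjl (b p q : D) :
  b \is a GRing.unit -> q \is a GRing.unit ->
  b * C * p = p * b -> q * C * p = 1 + b ^+ 4 ->
  b^-1 * p * b^-1 = q^-1 * (b^-1 * b^-1) + q^-1 * (b * b).
Proof.
move=> ub uq Qb Eq.
have Cp : C * p = b^-1 * p * b by rewrite -mulrA -Qb -mulrA mulKr.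
have bpb : b^-1 * p * b = q^-1 * (1 + b ^+ 4) by rewrite -Cp -Eq -mulrA mulKr.
have -> : b^-1 * p * b^-1 = b^-1 * p * b * b^-1 * b^-1 by rewrite mulrK.
by rewrite bpb expr4 mulrDr mulr1 !mulrA mulrDl mulrDl !mulrK.
Qed.

Lemma quartic_conjr (c q r : D) :
  c \is a GRing.unit -> q \is a GRing.unit ->
  c * C * q = q * c -> r * C * q = 1 + c ^+ 4 ->
  c^-1 * r * c^-1 = (c^-1 * c^-1) * q^-1 + (c * c) * q^-1.
Proof.
move=> uc uq Qc Er.
have Cq : C * q = c^-1 * q * c by rewrite -mulrA -Qc -mulrA mulKr.
have rcqc : r * c^-1 * q * c = 1 + c ^+ 4.
  by rewrite -Er -[r * C * q]mulrA Cq !mulrA.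
have rc : r * c^-1 = (1 + c ^+ 4) * c^-1 * q^-1 by rewrite -rcqc !mulrK.
rewrite -mulrA rc expr4 !mulrA mulrDr mulr1 mulrDl mulrDl.
by rewrite !mulrA mulVr // mul1r mulrK.
Qed.

Definition conserved_form (b q c : D) : D :=
  (1 + q^-1) * (b^-1 * b^-1) + q^-1 * (b * b) + c * b^-1.

Lemma conserved_form_prev (b p q c : D) :
  b \is a GRing.unit -> q \is a GRing.unit ->
  c * C * b = 1 + q -> q * C * p = 1 + b ^+ 4 ->
  q * C * b = b * q -> b * C * p = p * b ->
  b^-1 * (1 + C^-1 + p + q) * b^-1 = conserved_form b q c.
Proof.
move=> ub uq Ec Eq Qq Qb.
have -> : 1 + C^-1 + p + q = 1 + p + (C^-1 + q) by rewrite -!addrA (addrCA C^-1).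
rewrite -(qcomm_mul ub Ec Qq) !mulrDr !mulrDl mulr1 (quartic_conjl ub uq Qb Eq).
by rewrite mulKr // /conserved_form mulrDl mul1r !addrA.
Qed.

Lemma conserved_form_next (b q c r : D) :
  b \is a GRing.unit -> q \is a GRing.unit -> c \is a GRing.unit ->
  c * C * b = 1 + q -> r * C * q = 1 + c ^+ 4 ->
  q * C * b = b * q -> c * C * q = q * c ->
  c^-1 * (1 + C^-1 + q + r) * c^-1 = conserved_form b q c.
Proof.
move=> ub uq uc Ec Er Qq Qc.
have cqb := qcomm_mul_inv uq Ec Qq.
rewrite -(addrA 1 C^-1 q) -(qcomm_mul ub Ec Qq) !mulrDr !mulrDl mulr1.
rewrite (quartic_conjr uc uq Qc Er) (mulrA c^-1 b c) mulrK //.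
have h1 : c^-1 * c^-1 + c^-1 * c^-1 * q^-1 = c^-1 * q^-1 * b.
  by rewrite -{1}(mulr1 (c^-1 * c^-1)) -mulrDr -cqb !mulrA divrK.
have h2 : c^-1 * b + c^-1 * q^-1 * b = q^-1 * (b * b).
  rewrite -(mulrA c^-1 q^-1 b) -mulrDr -{1}(mul1r b) -mulrDl -cqb !mulrA.
  by rewrite mulVr // mul1r -mulrA.
have h3 : c * c * q^-1 = c * b^-1 + (1 + q^-1) * (b^-1 * b^-1).
  have -> : c * c * q^-1 = c * (c * q^-1 * b) * b^-1 by rewrite !mulrA mulrK.
  rewrite cqb mulrDr mulr1 mulrDl; congr (_ + _).
  by rewrite -cqb !mulrA mulrK.
rewrite addrA (addrC (c^-1 * c^-1)) -(addrA (c^-1 * b)) h1 h2 h3 /conserved_form.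
by rewrite (addrC (c * b^-1)) addrA (addrC (q^-1 * (b * b))).
Qed.

Lemma three_term_relations (a b c w w' : D) :
  b \is a GRing.unit ->
  b * C * a = 1 + w -> c * C * b = 1 + w' ->
  a * b = C^-1 + w -> b * c = C^-1 + w' ->
  let K := b^-1 * (1 + C^-1 + w + w') * b^-1 in
  c * C - b * K + a = 0 /\ c - K * b + C * a = 0.
Proof.
move=> ub Ea Ec Pa Pc K.
have bKb : b * K * b = 1 + C^-1 + w + w' by rewrite /K !mulrA mulrV // mul1r divrK.
split; apply/eqP; rewrite addrAC subr_eq0; apply/eqP.
  apply: (mulIr ub); rewrite mulrDl Ec Pa bKb.
  by rewrite addrACA (addrC w') addrA.
apply: (mulrI ub); rewrite mulrDr Pc mulrA Ea mulrA bKb.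
by rewrite addrACA (addrC C^-1) (addrC w') addrA.
Qed.

End RingIdentities.

Lemma int_iff_shift (P : int -> Prop) :
  (forall k, P (k + 1) <-> P k) -> forall k, P k <-> P 0.
Proof.
move=> shift.
have pos (n : nat) : P n <-> P 0 by elim: n => [//|n IH]; rewrite -addn1 PoszD shift.
have neg (n : nat) : P (- n%:Z) <-> P 0.
  by elim: n => [|n IH]; rewrite ?oppr0 // -IH -shift -addn1 PoszD opprD addrNK.
by case=> n; rewrite ?NegzE.
Qed.

Lemma int_parity (j : int) : exists k : int, j = 2 * k \/ j = 2 * k + 1.
Proof. by exists (j %/ 2)%Z; lia. Qed.

Section System14.

Variables (D : unitRingType) (C : D) (R : int -> D).
Hypothesis sysR : sys14 C R.

Lemma sys14_even k : R (2 * k + 2) * C * R (2 * k) = 1 + R (2 * k + 1).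
Proof.
have [E _] := sysR (k + 1).
have e1 : 2 * (k + 1) = 2 * k + 2 by lia.
have e2 : 2 * k + 2 - 2 = 2 * k by lia.
have e3 : 2 * k + 2 - 1 = 2 * k + 1 by lia.
by rewrite e1 e2 e3 in E.
Qed.

Lemma sys14_odd k : R (2 * k + 3) * C * R (2 * k + 1) = 1 + R (2 * k + 2) ^+ 4.
Proof.
have [_ E] := sysR (k + 1).
have e1 : 2 * (k + 1) = 2 * k + 2 by lia.
have e2 : 2 * k + 2 + 1 = 2 * k + 3 by lia.
have e3 : 2 * k + 2 - 1 = 2 * k + 1 by lia.
by rewrite e1 e2 e3 in E.
Qed.

Hypotheses (unitC : C \is a GRing.unit) (unitR : forall n, R n \is a GRing.unit).

Definition qcomm (j : int) : Prop := R (j + 1) * C * R j = R j * R (j + 1).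

Lemma qcomm_succ j : qcomm (j + 1) <-> qcomm j.
Proof.
have e1 (k : int) : 2 * k + 1 + 1 = 2 * k + 2 by lia.
have e2 (k : int) : 2 * k + 2 + 1 = 2 * k + 3 by lia.
have [k [->|->]] := int_parity j; rewrite /qcomm e1 ?e2; symmetry.
  exact: qcomm_transfer (sys14_even k) _.
by apply: qcomm_transfer (sys14_odd k) _; rewrite // -exprSr exprS.
Qed.

Lemma qcomm_all j0 : qcomm j0 -> forall j, qcomm j.
Proof.
by move=> Q0 j; rewrite (int_iff_shift qcomm_succ j) -(int_iff_shift qcomm_succ j0).
Qed.

Hypothesis qcommR : forall j, qcomm j.

Definition conserved (m : int) : D :=
  (R (2 * m))^-1 * (1 + C^-1 + R (2 * m - 1) + R (2 * m + 1)) * (R (2 * m))^-1.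

Lemma conserved_formE m :
  conserved m = conserved_form (R (2 * m)) (R (2 * m + 1)) (R (2 * m + 2)).
Proof.
apply: conserved_form_prev => //; first exact: sys14_even.
- by have [_ ->] := sysR m.
- exact: qcommR.
have := qcommR (2 * m - 1); rewrite /qcomm.
by rewrite (_ : 2 * m - 1 + 1 = 2 * m) //; lia.
Qed.

Lemma conservedS_formE m :
  conserved (m + 1) = conserved_form (R (2 * m)) (R (2 * m + 1)) (R (2 * m + 2)).
Proof.
have e1 : 2 * (m + 1) = 2 * m + 2 by lia.
have e2 : 2 * m + 2 - 1 = 2 * m + 1 by lia.
have e3 : 2 * m + 2 + 1 = 2 * m + 3 by lia.
rewrite /conserved e1 e2 e3; apply: conserved_form_next => //.
- exact: sys14_even.
- exact: sys14_odd.
- exact: qcommR.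
have := qcommR (2 * m + 1); rewrite /qcomm.
by rewrite (_ : 2 * m + 1 + 1 = 2 * m + 2) //; lia.
Qed.

Lemma conserved_const m : conserved m = conserved 0.
Proof.
have shift k : conserved (k + 1) = conserved 0 <-> conserved k = conserved 0.
  by rewrite conservedS_formE (conserved_formE k).
exact/(int_iff_shift shift).
Qed.

Lemma lin_rels_conserved m : lin_rels C (conserved m) R.
Proof.
move=> n; rewrite (conserved_const m) -(conserved_const (n + 1)).
have e1 : 2 * (n + 1) - 2 = 2 * n by lia.
have e2 : 2 * (n + 2) - 2 = 2 * (n + 1) by lia.
have e3 : 2 * (n + 2) - 1 = 2 * (n + 1) + 1 by lia.
have e4 : 2 * n + 1 = 2 * (n + 1) - 1 by lia.
have Ea : R (2 * (n + 1)) * C * R (2 * n) = 1 + R (2 * (n + 1) - 1).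
  by have [] := sysR (n + 1); rewrite e1.
have Ec : R (2 * (n + 2)) * C * R (2 * (n + 1)) = 1 + R (2 * (n + 1) + 1).
  by have [] := sysR (n + 2); rewrite e2 e3.
have Qa := qcommR (2 * n); rewrite /qcomm e4 in Qa.
have Qb := qcommR (2 * (n + 1)); rewrite /qcomm in Qb.
exact: three_term_relations (qcomm_mul unitC (unitR _) Ea Qa)
                            (qcomm_mul unitC (unitR _) Ec Qb).
Qed.

End System14.

Section CommC.

Variables (D : unitRingType) (x y : D).
Hypotheses (ux : x \is a GRing.unit) (uy : y \is a GRing.unit).

Lemma commC_unit : commC x y \is a GRing.unit.
Proof. by rewrite /commC !unitrMl ?unitrV. Qed.

Lemma commC_conj : commC x y * (y * x * y^-1) = x.
Proof. by rewrite /commC !mulrA divrK // divrK // mulrK. Qed.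

Lemma commCV : (commC x y)^-1 = y * x * y^-1 * x^-1.
Proof. by rewrite /commC !invrM ?unitrMl ?unitrV // !invrK !mulrA. Qed.

End CommC.

Lemma lin_rels_init_a (D : unitRingType) (x y : D) (R : int -> D) :
  x \is a GRing.unit -> y \is a GRing.unit -> (forall n, R n \is a GRing.unit) ->
  R 0 = y * x * y^-1 -> R 1 = y -> sys14 (commC x y) R ->
  lin_rels (commC x y) ((x ^+ 2 + ((1 + y) * x^-1) ^+ 2) * y^-1) R.
Proof.
move=> ux uy uR R0 R1 sysR; set C := commC x y.
have uC : C \is a GRing.unit by exact: commC_unit.
have CR0 : C * R 0 = x by rewrite R0 commC_conj.
have Q0 : qcomm C R 0 by rewrite /qcomm add0r -mulrA CR0 R0 R1 divrK.
have QR := qcomm_all sysR uC uR Q0.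
have R2 : R 2 = (1 + y) / x.
  by have := sys14_even sysR 0; rewrite mulr0 add0r -mulrA CR0 R1 => <-; rewrite mulrK.
have R0V : (R 0)^-1 = y / x / y by rewrite R0 !invrM ?unitrMl ?unitrV // !invrK !mulrA.
suff -> : (x ^+ 2 + ((1 + y) / x) ^+ 2) / y = conserved C R 0.
  exact: lin_rels_conserved sysR uC uR QR 0.
rewrite conserved_formE // mulr0 add0r R2 /conserved_form R0V R0 R1.
have T1 : (1 + y^-1) * (y / x / y * (y / x / y)) = (1 + y) / x / x / y.
  by rewrite !mulrA divrK // mulrDl mul1r mulVr // addrC.
have T2 : y^-1 * (y * x / y * (y * x / y)) = x * x / y.
  by rewrite !mulrA divrK // mulVr // mul1r.
have T3 : (1 + y) / x * ((1 + y) / x) / y = (1 + y) / x / x / y + (1 + y) / x * y / x / y.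
  by rewrite !mulrA mulrDr mulr1 !mulrDl.
by rewrite T1 T2 !expr2 mulrDl T3 !mulrA addrA (addrC (x * x / y)).
Qed.

Lemma lin_rels_init_b (D : unitRingType) (X Y : D) (R : int -> D) :
  X \is a GRing.unit -> Y \is a GRing.unit -> (forall n, R n \is a GRing.unit) ->
  R 1 = Y * X * Y^-1 -> R 2 = Y -> sys14 (commC X Y) R ->
  lin_rels (commC X Y) ((Y ^+ 2 + ((1 + X) * Y^-1) ^+ 2) * Y * X^-1 * Y^-1) R.
Proof.
move=> uX uY uR R1 R2 sysR; set C := commC X Y.
have uC : C \is a GRing.unit by exact: commC_unit.
have CR1 : C * R 1 = X by rewrite R1 commC_conj.
have Q1 : qcomm C R 1 by rewrite /qcomm (_ : 1 + 1 = 2) // -mulrA CR1 R1 R2 divrK.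
have QR := qcomm_all sysR uC uR Q1.
have R3 : R 3 = (1 + Y ^+ 4) / X.
  by have := sys14_odd sysR 0; rewrite mulr0 add0r -mulrA CR1 R2 => <-; rewrite mulrK.
suff -> : (Y ^+ 2 + ((1 + X) / Y) ^+ 2) * Y / X / Y = conserved C R 1.
  exact: lin_rels_conserved sysR uC uR QR 1.
rewrite /conserved mulr1 (_ : 2 - 1 = 1) // (_ : 2 + 1 = 3) // R1 R2 R3.
rewrite commCV // expr4 !expr2.
rewrite !(mulrDr, mulrDl, mulr1, mul1r) !mulrA.
rewrite !(divrK uY, mulVr uY, mulrK uX, mul1r).
by rewrite [LHS](AC (1 * (2 * 2)) ((4 * 3 * 5) * (2 * 1))).
Qed.

Theorem theorem4p2 :
  (forall (D : unitRingType) (x y : D) (R : int -> D),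
     skew_field_char0 D ->
     x \is a GRing.unit -> y \is a GRing.unit ->
     (forall n, R n \is a GRing.unit) ->
     R 0 = y * x * y^-1 -> R 1 = y ->
     sys14 (commC x y) R ->
     lin_rels (commC x y) ((x ^+ 2 + ((1 + y) * x^-1) ^+ 2) * y^-1) R) /\
  (forall (D : unitRingType) (X Y : D) (R : int -> D),
     skew_field_char0 D ->
     X \is a GRing.unit -> Y \is a GRing.unit ->
     (forall n, R n \is a GRing.unit) ->
     R 1 = Y * X * Y^-1 -> R 2 = Y ->
     sys14 (commC X Y) R ->
     lin_rels (commC X Y) ((Y ^+ 2 + ((1 + X) * Y^-1) ^+ 2) * Y * X^-1 * Y^-1) R).
Proof.
by split=> D x y R _; [exact: lin_rels_init_a | exact: lin_rels_init_b].
Qed.
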